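(* Let $p$ be an odd prime with $p\equiv 3\pmod 4$. Then for any odd Dirichlet characters $\chi_1,\chi_2$ modulo $p$ with $\chi_1\chi_2\neq\chi_0$, $$\sum_{a=0}^{p-1}\sum_{b=0}^{p-1}\sum_{c=0}^{p-1}\sum_{d=0}^{p-1}\overline{\chi_1}\,\overline{\chi_2}(a^4+b^4-c^4-d^4)\,\chi_1\chi_2(a^2+b^2-c^2-d^2)=0.$$
   Context: $\chi_0$ denotes the principal character modulo $p$. A character $\chi$ is odd if $\chi(-1)=-1$. Dirichlet characters modulo $p$ are extended by $\chi(x)=0$ when $p\mid x$, and $\overline{\chi}$ denotes the complex conjugate character; $\overline{\chi_1}\,\overline{\chi_2}(x)$ means $\overline{\chi_1}(x)\overline{\chi_2}(x)$. *)

From mathcomp Require Import all_boot all_order all_algebra all_field.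
Set Implicit Arguments. Unset Strict Implicit. Unset Printing Implicit Defensive.
Import GRing.Theory Num.Theory.
Local Open Scope ring_scope.

Definition dirichlet_char (p : nat) (chi : int -> algC) : Prop :=
  [/\ forall x : int, chi (x + (p%:Z)) = chi x,
      forall x y : int, chi (x * y) = chi x * chi y &
      forall x : int, (chi x == 0) = (p%:Z %| x)%Z ].

Definition principal_char (p : nat) : int -> algC :=
  fun x => if (p%:Z %| x)%Z then 0 else 1.

Definition odd_char (chi : int -> algC) : Prop := chi (-1) = -1.

(* With chi = chi1 chi2, an even character mod p, the summand is
   conj(chi(a^4 + b^4 - c^4 - d^4)) chi(a^2 + b^2 - c^2 - d^2).  Scaling
   (a, b, c, d) by a unit k permutes the residues and multiplies the summand
   by conj(chi k)^4 chi(k)^2 = conj(chi k)^2, so S = conj(chi k)^2 S and S = 0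
   unless chi(k)^2 = 1 for every unit k.  That cannot happen for p = 3 mod 4
   and chi even and non-principal: with m = (p - 1)/2 odd, k^m is congruent to
   1 or -1, hence chi(k) = chi(k)^m = chi(k^m) = 1. *)
From mathcomp Require Import all_boot all_order all_algebra all_field.
From mathcomp Require cyclic.
From mathcomp Require Import ring zify.
From Stdlib Require Import FunctionalExtensionality.
Import GRing.Theory Num.Theory.
Local Open Scope ring_scope.

Lemma PoszX (m n : nat) : (m ^ n)%N%:Z = m%:Z ^+ n.
Proof. by rewrite -!natz natrX. Qed.

Lemma dirichlet_charM (p : nat) (chi1 chi2 : int -> algC) :
  dirichlet_char p chi1 -> dirichlet_char p chi2 ->
  dirichlet_char p (fun x => chi1 x * chi2 x).
Proof.
move=> [per1 mul1 eq01] [per2 mul2 eq02]; split=> [x | x y | x].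
- by rewrite per1 per2.
- by rewrite mul1 mul2 mulrACA.
- by rewrite mulf_eq0 eq01 eq02 orbb.
Qed.

Lemma sum_ord_scalez {V : nmodType} (p k : nat) (G : int -> V) :
  (1 < p)%N -> coprime p k -> (forall x y, (x = y %[mod p])%Z -> G x = G y) ->
  \sum_(a < p) G a = \sum_(a < p) G (k%:Z * a).
Proof.
case: p => [|[|p']] // _ p_coprime_k G_mod.
have k_unit : (k%:R : 'Z_p'.+2) \is a GRing.unit by rewrite unitZpE.
rewrite (reindex_inj (mulrI k_unit)); apply: eq_bigr => a _; apply: G_mod.
by rewrite /= Zp_nat /= -PoszM !modz_nat modn_mod modnMml.
Qed.

Lemma sum4_ord_scalez {V : nmodType} (p k : nat)
    (F : int -> int -> int -> int -> V) :
  (1 < p)%N -> coprime p k ->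
  (forall a b c d a' b' c' d', (a = a' %[mod p])%Z -> (b = b' %[mod p])%Z ->
     (c = c' %[mod p])%Z -> (d = d' %[mod p])%Z -> F a b c d = F a' b' c' d') ->
  \sum_(a < p) \sum_(b < p) \sum_(c < p) \sum_(d < p) F a b c d =
  \sum_(a < p) \sum_(b < p) \sum_(c < p) \sum_(d < p)
     F (k%:Z * a) (k%:Z * b) (k%:Z * c) (k%:Z * d).
Proof.
move=> p_gt1 p_coprime_k F_mod.
rewrite (sum_ord_scalez p k
          (fun x => \sum_(b < p) \sum_(c < p) \sum_(d < p) F x b c d)) //;
  last by move=> x y exy; do 3!apply: eq_bigr => ? _; exact: F_mod.
apply: eq_bigr => a _.
rewrite (sum_ord_scalez p k
          (fun y => \sum_(c < p) \sum_(d < p) F (k%:Z * a) y c d)) //;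
  last by move=> x y exy; do 2!apply: eq_bigr => ? _; exact: F_mod.
apply: eq_bigr => b _.
rewrite (sum_ord_scalez p k
          (fun y => \sum_(d < p) F (k%:Z * a) (k%:Z * b) y d)) //;
  last by move=> x y exy; apply: eq_bigr => ? _; exact: F_mod.
apply: eq_bigr => c _.
rewrite (sum_ord_scalez p k (F (k%:Z * a) (k%:Z * b) (k%:Z * c))) //.
by move=> x y; exact: F_mod.
Qed.

Definition diag_form {R : pzRingType} n (a b c d : R) :=
  a ^+ n + b ^+ n - c ^+ n - d ^+ n.

Lemma diag_form_scale (R : comPzRingType) n (k a b c d : R) :
  diag_form n (k * a) (k * b) (k * c) (k * d) = k ^+ n * diag_form n a b c d.
Proof. by rewrite /diag_form !exprMn !mulrBr mulrDr. Qed.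

Lemma diag_form_congr (m : int) n a b c d a' b' c' d' :
  (a = a' %[mod m])%Z -> (b = b' %[mod m])%Z ->
  (c = c' %[mod m])%Z -> (d = d' %[mod m])%Z ->
  (diag_form n a b c d = diag_form n a' b' c' d' %[mod m])%Z.
Proof.
have dvd_subX x y : (x = y %[mod m])%Z -> (m %| x ^+ n - y ^+ n)%Z.
  by move=> exy; rewrite -eqz_mod_dvd -modzXm exy modzXm.
move=> /dvd_subX ea /dvd_subX eb /dvd_subX ec /dvd_subX ed.
apply/eqP; rewrite eqz_mod_dvd.
have -> : diag_form n a b c d - diag_form n a' b' c' d' =
    (a ^+ n - a' ^+ n) + (b ^+ n - b' ^+ n) - (c ^+ n - c' ^+ n) - (d ^+ n - d' ^+ n).
  by rewrite /diag_form; ring.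
by apply: rpredB => //; apply: rpredB => //; apply: rpredD.
Qed.

Definition diag_char_term (chi : int -> algC) (n m : nat) (a b c d : int) : algC :=
  (chi (diag_form n a b c d))^* * chi (diag_form m a b c d).

Definition diag_char_sum (p : nat) (chi : int -> algC) (n m : nat) : algC :=
  \sum_(a < p) \sum_(b < p) \sum_(c < p) \sum_(d < p) diag_char_term chi n m a b c d.

Section DirichletCharacter.

Local Set Implicit Arguments.
Local Unset Strict Implicit.

Variables (p : nat) (chi : int -> algC).
Hypotheses (p_prime : prime p) (chiP : dirichlet_char p chi).

Lemma fermat_natz (k : nat) : ~~ (p %| k)%N -> (k%:Z ^+ p.-1 = 1 %[mod p])%Z.
Proof.
move=> pNk; rewrite -PoszX !modz_nat -(totient_prime p_prime).
by rewrite cyclic.Euler_exp_totient // coprime_sym prime_coprime.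
Qed.

Lemma dcharM x y : chi (x * y) = chi x * chi y.
Proof. by case: chiP. Qed.

Lemma dchar_eq0 x : (chi x == 0) = (p%:Z %| x)%Z.
Proof. by case: chiP. Qed.

Lemma dcharDMp (x q : int) : chi (x + q * p) = chi x.
Proof.
have [chi_per _ _] := chiP.
have chiDMn y (n : nat) : chi (y + n%:Z * p) = chi y.
  elim: n => [|n IHn]; first by rewrite mul0r addr0.
  by rewrite -addn1 PoszD mulrDl mul1r addrA chi_per.
case: q => n; first exact: chiDMn.
by rewrite NegzE mulNr -(chiDMn _ n.+1) subrK.
Qed.

Lemma dchar_mod x : chi (x %% p)%Z = chi x.
Proof. by rewrite {2}(divz_eq x p) addrC dcharDMp. Qed.

Lemma dchar_congr x y : (x = y %[mod p])%Z -> chi x = chi y.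
Proof. by move=> exy; rewrite -dchar_mod exy dchar_mod. Qed.

Lemma dchar1 : chi 1 = 1.
Proof.
have chi1_neq0 : chi 1 != 0.
  by rewrite dchar_eq0 dvdzE dvdn1 gtn_eqF ?prime_gt1.
by apply: (mulfI chi1_neq0); rewrite -dcharM !mulr1.
Qed.

Lemma dcharX x n : chi (x ^+ n) = chi x ^+ n.
Proof. by elim: n => [|n IHn]; rewrite ?dchar1 // !exprS dcharM IHn. Qed.

Lemma dchar_fermat (k : nat) : ~~ (p %| k)%N -> chi k ^+ p.-1 = 1.
Proof. by move=> pNk; rewrite -dcharX -dchar1; apply: dchar_congr; exact: fermat_natz. Qed.

Lemma mul_conj_dchar (k : nat) : ~~ (p %| k)%N -> (chi k)^* * chi k = 1.
Proof.
move=> pNk; rewrite -normCKC.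
have /eqP : `|chi k| ^+ p.-1 = 1 by rewrite -normrX dchar_fermat // normr1.
by rewrite pexpr_eq1 ?ltn_predRL ?prime_gt1 // => /eqP ->; rewrite expr1n.
Qed.

Section EvenCharacter.

Hypothesis chi_even : chi (-1) = 1.

Lemma dchar_absz x : chi x = chi `|x|%N.
Proof. by case: x => n //; rewrite NegzE abszN -mulN1r dcharM chi_even mul1r. Qed.

Lemma even_dchar_sqrt1 x : (x ^+ 2 = 1 %[mod p])%Z -> chi x = 1.
Proof.
move/eqP; rewrite eqz_mod_dvd.
have -> : x ^+ 2 - 1 = (x - 1) * (x - -1) by ring.
rewrite dvdzE abszM Euclid_dvdM // -!dvdzE -!eqz_mod_dvd.
by case/orP => /eqP/dchar_congr ->; rewrite ?dchar1.
Qed.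

Hypothesis p_mod4 : (p %% 4 = 3)%N.

Lemma even_dchar_sqr_eq1 (k : nat) :
  ~~ (p %| k)%N -> chi k ^+ 2 = 1 -> chi k = 1.
Proof.
move=> pNk chik2; set q := (p %/ 4)%N.
have p_pred : p.-1 = (q.*2.+1 * 2)%N by rewrite [in LHS](divn_eq p 4) p_mod4 /q; lia.
have : chi (k%:Z ^+ q.*2.+1) = 1.
  by apply: even_dchar_sqrt1; rewrite -exprM -p_pred fermat_natz.
by rewrite dcharX exprS -muln2 exprM exprAC chik2 expr1n mulr1.
Qed.

Lemma even_dchar_principal :
  (forall k : nat, ~~ (p %| k)%N -> chi k ^+ 2 = 1) -> chi = principal_char p.
Proof.
move=> chi_sqr1; apply: functional_extensionality => x; rewrite /principal_char.
case: ifPn => [px | pNx]; first by apply/eqP; rewrite dchar_eq0.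
by rewrite dchar_absz even_dchar_sqr_eq1 ?chi_sqr1.
Qed.

End EvenCharacter.

Section DiagCharSum.

Variables (n m : nat).
Hypothesis m_le_n : (m <= n)%N.

Lemma diag_char_term_congr a b c d a' b' c' d' :
  (a = a' %[mod p])%Z -> (b = b' %[mod p])%Z ->
  (c = c' %[mod p])%Z -> (d = d' %[mod p])%Z ->
  diag_char_term chi n m a b c d = diag_char_term chi n m a' b' c' d'.
Proof.
move=> ea eb ec ed; rewrite /diag_char_term.
by congr (_^* * _); apply: dchar_congr; exact: diag_form_congr.
Qed.

Lemma diag_char_term_scale (k : nat) a b c d : ~~ (p %| k)%N ->
  diag_char_term chi n m (k%:Z * a) (k%:Z * b) (k%:Z * c) (k%:Z * d) =
  (chi k)^* ^+ (n - m) * diag_char_term chi n m a b c d.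
Proof.
move=> pNk; rewrite /diag_char_term !diag_form_scale !dcharM !dcharX.
rewrite rmorphM rmorphXn -{1}(subnK m_le_n) exprD mulrACA -[_ * chi k ^+ m]mulrA.
by rewrite -exprMn mul_conj_dchar // expr1n mulr1.
Qed.

Lemma diag_char_sum_scale (k : nat) : ~~ (p %| k)%N ->
  diag_char_sum p chi n m = (chi k)^* ^+ (n - m) * diag_char_sum p chi n m.
Proof.
move=> pNk; rewrite {1}/diag_char_sum (sum4_ord_scalez p k) ?prime_gt1 ?prime_coprime //;
  last exact: diag_char_term_congr.
rewrite /diag_char_sum; do 4!(rewrite mulr_sumr; apply: eq_bigr => ? _).
exact: diag_char_term_scale.
Qed.

Lemma diag_char_sum_eq0 (k : nat) : ~~ (p %| k)%N -> chi k ^+ (n - m) != 1 ->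
  diag_char_sum p chi n m = 0.
Proof.
move=> pNk chik_neq1.
have conj_neq1 : (chi k)^* ^+ (n - m) != 1.
  by apply: contra chik_neq1 => /eqP e; rewrite -[chi k]conjCK -rmorphXn e rmorph1.
apply/eqP; have /eqP := diag_char_sum_scale pNk.
rewrite -subr_eq0 -{1}[diag_char_sum _ _ _ _]mul1r -mulrBl mulf_eq0 subr_eq0.
by rewrite eq_sym (negbTE conj_neq1).
Qed.

End DiagCharSum.

End DirichletCharacter.

Theorem lemma2p3 (p : nat) (chi1 chi2 : int -> algC) :
  prime p -> odd p -> (p %% 4 = 3)%N ->
  dirichlet_char p chi1 -> dirichlet_char p chi2 ->
  odd_char chi1 -> odd_char chi2 ->
  (fun x => chi1 x * chi2 x) <> principal_char p ->
  \sum_(a < p) \sum_(b < p) \sum_(c < p) \sum_(d < p)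
     ((chi1 (a%:Z ^+ 4 + b%:Z ^+ 4 - c%:Z ^+ 4 - d%:Z ^+ 4))^* *
      (chi2 (a%:Z ^+ 4 + b%:Z ^+ 4 - c%:Z ^+ 4 - d%:Z ^+ 4))^* *
      (chi1 (a%:Z ^+ 2 + b%:Z ^+ 2 - c%:Z ^+ 2 - d%:Z ^+ 2) *
       chi2 (a%:Z ^+ 2 + b%:Z ^+ 2 - c%:Z ^+ 2 - d%:Z ^+ 2))) = 0.
Proof.
move=> p_prime _ p_mod4 chi1P chi2P chi1_odd chi2_odd chi_nonprincipal.
set chi := fun x => chi1 x * chi2 x.
have chiP : dirichlet_char p chi by exact: dirichlet_charM.
have chi_even : chi (-1) = 1 by rewrite /chi chi1_odd chi2_odd mulrNN mulr1.
transitivity (diag_char_sum p chi 4 2).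
  by do 4!apply: eq_bigr => ? _; rewrite /diag_char_term /chi rmorphM.
have [// | sum_neq0] := eqVneq (diag_char_sum p chi 4 2) 0.
case: chi_nonprincipal; apply: even_dchar_principal => // k pNk.
apply/eqP; apply: contraNT sum_neq0 => chik2_neq1.
by apply/eqP; apply: (diag_char_sum_eq0 p_prime chiP _ pNk).
Qed.
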